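(* Let $n\in\mathbb N$, let $K_1,\dots,K_n$ be singular kernel functions and let $J$ be an arbitrary $n$-field function. Then for each $j\in\{0,1,\dots,n\}$ the function $m_j:\overline S\to[-\infty,\infty)$ is continuous in the extended sense. That is, at points $\mathbf y$ with $m_j(\mathbf y)=-\infty$ one has $m_j(\mathbf x)\to-\infty$ as $\mathbf x\to\mathbf y$.
   Context: A kernel function is a function $K:(-1,0)\cup(0,1)\to\mathbb R$ that is concave on $(-1,0)$ and concave on $(0,1)$ and satisfies $\lim_{t\downarrow0}K(t)=\lim_{t\uparrow0}K(t)$. It is extended to $[-1,1]$ with values in $[-\infty,\infty)$ by its one-sided limits at $-1,0,1$. A kernel function is singular if $K(0)=-\infty$. An $n$-field function is a function $J:[0,1]\to[-\infty,\infty)$ that is bounded above and whose set of finite values has total weight strictly greater than $n$. Here the points $0$ and $1$ each have weight $1/2$ and every point of $(0,1)$ has weight $1$. No continuity of $J$ is assumed. $\overline S=\{\mathbf y\in\mathbb R^n:0\le y_1\le\dots\le y_n\le1\}$. $F(\mathbf y,t)=J(t)+\sum_{i=1}^nK_i(t-y_i)$, with the convention $a+(-\infty)=-\infty$. Set $y_0:=0$ and $y_{n+1}:=1$. For $j=0,\dots,n$ let $I_j(\mathbf y)=[y_j,y_{j+1}]$ and $m_j(\mathbf y)=\sup_{t\in I_j(\mathbf y)}F(\mathbf y,t)$. *)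

From HB Require Import structures.
From mathcomp Require Import all_boot all_order all_algebra.
From mathcomp Require Import all_classical all_reals all_analysis.
Set Implicit Arguments. Unset Strict Implicit. Unset Printing Implicit Defensive.
Import Order.TTheory GRing.Theory Num.Theory.
Import numFieldNormedType.Exports.
Local Open Scope classical_set_scope.
Local Open Scope ring_scope.

Section Defs.
Variable R : realType.

Definition concave_on_oo (a b : R) (K : R -> \bar R) : Prop :=
  forall x y l : R, a < x < b -> a < y < b -> 0 <= l <= 1 ->
    (l%:E * K x + (1 - l)%R%:E * K y <= K (l * x + (1 - l) * y)%R)%E.

(* A kernel function, already extended to [-1,1] by its one-sided limits.
   Values outside [-1,1] are irrelevant. *)
Definition kernel_limits (K : R -> \bar R) : Prop :=
  (K t @[t --> at_right 0] --> K 0) /\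
  (K t @[t --> at_left 0] --> K 0) /\
  (K t @[t --> at_right (-1)] --> K (-1)) /\
  (K t @[t --> at_left 1] --> K 1).

Definition is_kernel (K : R -> \bar R) : Prop :=
  [/\ (forall t, -1 < t < 0 \/ 0 < t < 1 -> K t \is a fin_num),
      (forall t, -1 <= t <= 1 -> K t != +oo%E),
      concave_on_oo (-1) 0 K,
      concave_on_oo 0 1 K &
      kernel_limits K].

Definition singular_kernel (K : R -> \bar R) : Prop := K 0 = -oo%E.

(* n-field function on [0,1]: bounded above, and the set of points where it is
   finite has weight > n (endpoints weigh 1/2, interior points weigh 1).
   The weight condition is written (times 2) via finitely many distinct
   interior points: 2 * #points + [0 finite] + [1 finite] > 2 n. *)
Definition is_field_fun (n : nat) (J : R -> \bar R) : Prop :=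
  (exists M : R, forall t, 0 <= t <= 1 -> (J t <= M%:E)%E) /\
  exists s : seq R, [/\ uniq s,
    (forall t, t \in s -> 0 < t < 1 /\ J t \is a fin_num) &
    (2 * n < 2 * size s + `[< J 0%R \is a fin_num >] + `[< J 1%R \is a fin_num >])%N].

(* y_0 := 0, y_k := y's k-th coordinate (1-based) for 1 <= k <= n, y_{n+1} := 1 *)
Definition yext (n : nat) (y : 'rV[R]_n) (k : nat) : R :=
  if k is k'.+1 then oapp (fun i : 'I_n => y 0 i) 1 (insub k') else 0.

Definition Sbar (n : nat) : set 'rV[R]_n :=
  [set y | forall k : nat, (k <= n)%N -> yext y k <= yext y k.+1].

Definition Ffun (n : nat) (J : R -> \bar R) (K : 'I_n -> R -> \bar R)
  (y : 'rV[R]_n) (t : R) : \bar R :=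
  (J t + \sum_(i < n) K i (t - y 0 i)%R)%E.

Definition mj (n : nat) (J : R -> \bar R) (K : 'I_n -> R -> \bar R)
  (j : nat) (y : 'rV[R]_n) : \bar R :=
  ereal_sup [set Ffun J K y t | t in `[yext y j, yext y j.+1]].

End Defs.

From HB Require Import structures.
From mathcomp Require Import all_boot all_order all_algebra.
From mathcomp Require Import all_classical all_reals all_analysis.
From mathcomp Require Import ring lra.
Import Order.TTheory GRing.Theory Num.Theory.
Import numFieldNormedType.Exports.
Set Implicit Arguments. Unset Strict Implicit. Unset Printing Implicit Defensive.
Local Open Scope classical_set_scope.
Local Open Scope ring_scope.

(* Write F(y, t) = J(t) + G(y, t) with G(y, t) = sum_i K_i(t - y_i).  A concave
   function is continuous inside its interval, and the kernels are continuous at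
   0 and +-1 by the way they are extended, so each K_i is continuous on [-1, 1]
   with values in [-oo, +oo); hence G is continuous in the extended sense on
   [0, 1] x Sbar.
   Lower semicontinuity of m_j: if F(y, t) > a then G(y, t) is finite, so by
   singularity t is none of the y_i; then t stays in I_j(x) for x near y, while
   G(x, t) stays close to G(y, t).
   Upper semicontinuity of m_j: near each (t0, y), either G(y, t0) = -oo and G is
   below c - sup J, or t0 is none of the y_i, so that I_j(x) stays inside I_j(y)
   near t0 and F(x, t) is close to F(y, t) <= m_j(y).  Compactness of [0, 1]
   makes these local bounds uniform in t. *)

Section concave_real.
Variable R : realType.
Implicit Types (f : R -> R) (a b : R).

Definition concave_on_oo_real a b f := forall x y l : R,
  a < x < b -> a < y < b -> 0 <= l <= 1 ->
  l * f x + (1 - l) * f y <= f (l * x + (1 - l) * y).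

Definition slope f x y := (f y - f x) / (y - x).

Lemma slopeC f x y : slope f x y = slope f y x.
Proof. by rewrite /slope -[f y - f x]opprB -[y - x]opprB invrN mulrNN. Qed.

Lemma slopeK f x y : x != y -> slope f x y * (y - x) = f y - f x.
Proof. by move=> xy; rewrite /slope divfK // subr_eq0 eq_sym. Qed.

Lemma concave_slope_le f a b p q r : concave_on_oo_real a b f ->
  a < p -> p < q -> q < r -> r < b ->
  slope f p r <= slope f p q /\ slope f q r <= slope f p r.
Proof.
move=> fconc ap pq qr rb.
have chord : (r - q) * f p + (q - p) * f r <= (r - p) * f q.
  pose l := (r - q) / (r - p).
  have l01 : 0 <= l <= 1 by rewrite /l divr_ge0 ?ler_pdivrMr /=; lra.
  have := fconc p r l ltac:(lra) ltac:(lra) l01.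
  have -> : l * p + (1 - l) * r = q by rewrite /l; field; lra.
  have -> : 1 - l = (q - p) / (r - p) by rewrite /l; field; lra.
  rewrite /l -!mulrA (mulrC _ (f p)) (mulrC _ (f r)) !mulrA -mulrDl.
  by rewrite ler_pdivrMr ?[f q * _]mulrC //; lra.
have spr := slopeK f (negbT (lt_eqF (lt_trans pq qr))).
have spq := slopeK f (negbT (lt_eqF pq)).
have sqr := slopeK f (negbT (lt_eqF qr)).
split.
- rewrite -(ler_pM2r (_ : 0 < (q - p) * (r - p))); last by apply: mulr_gt0; lra.
  have -> : slope f p r * ((q - p) * (r - p)) = (q - p) * (f r - f p).
    by rewrite -spr; ring.
  have -> : slope f p q * ((q - p) * (r - p)) = (r - p) * (f q - f p).
    by rewrite -spq; ring.
  lra.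
- rewrite -(ler_pM2r (_ : 0 < (r - q) * (r - p))); last by apply: mulr_gt0; lra.
  have -> : slope f q r * ((r - q) * (r - p)) = (r - p) * (f r - f q).
    by rewrite -sqr; ring.
  have -> : slope f p r * ((r - q) * (r - p)) = (r - q) * (f r - f p).
    by rewrite -spr; ring.
  lra.
Qed.

Lemma concave_slope_bounds f a b u v s0 s : concave_on_oo_real a b f ->
  a < u -> u < s0 -> s0 < v -> v < b -> u < s < v -> s != s0 ->
  slope f s0 v <= slope f s0 s <= slope f u s0.
Proof.
move=> fconc au us0 s0v vb /andP[us sv]; rewrite neq_lt => /orP[ss0|s0s].
- have [_ hi] := concave_slope_le fconc au us ss0 (lt_trans s0v vb).
  have [lo1 lo2] := concave_slope_le fconc (lt_trans au us) ss0 s0v vb.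
  by rewrite [slope f s0 s]slopeC (le_trans lo2 lo1) hi.
- have [lo _] := concave_slope_le fconc (lt_trans au us0) s0s sv vb.
  have [hi1 hi2] := concave_slope_le fconc au us0 s0s (lt_trans sv vb).
  by rewrite lo (le_trans hi2 hi1).
Qed.

Lemma concave_continuous f a b s0 : concave_on_oo_real a b f -> a < s0 < b ->
  f s @[s --> s0] --> f s0.
Proof.
move=> fconc /andP[as0 s0b].
pose u := (a + s0) / 2; pose v := (s0 + b) / 2.
have au : a < u by rewrite /u; lra.
have us0 : u < s0 by rewrite /u; lra.
have s0v : s0 < v by rewrite /v; lra.
have vb : v < b by rewrite /v; lra.
pose C : R := `|slope f s0 v| + `|slope f u s0| + 1.
have C0 : 0 < C by rewrite /C ltr_wpDl.
have lipschitz_at s : u < s < v -> `|f s - f s0| <= C * `|s - s0|.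
  move=> usv; have [->|ss0] := eqVneq s s0; first by rewrite !subrr normr0 mulr0.
  have /andP[lo hi] := concave_slope_bounds fconc au us0 s0v vb usv ss0.
  rewrite -(slopeK f (_ : s0 != s)) 1?eq_sym // normrM ler_wpM2r //.
  have := ler_norm (slope f s0 v); have := ler_norm (- slope f s0 v).
  have := ler_norm (slope f u s0); have := ler_norm (- slope f u s0).
  by rewrite !normrN ler_norml /C => *; apply/andP; split; lra.
apply/cvgrPdist_lt => e e0; near=> s.
have /lipschitz_at lip : u < s < v.
  rewrite -[_ && _]/(s \in `]u, v[); near: s.
  by apply: near_in_itvoo; rewrite in_itv /= us0.
rewrite distrC (le_lt_trans lip) // -ltr_pdivlMl // distrC.
by near: s; apply: cvgr_dist_lt; rewrite ?mulr_gt0 ?invr_gt0.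
Unshelve. all: by end_near.
Qed.

End concave_real.

Section kernel_continuity.
Variable R : realType.
Local Open Scope ereal_scope.

Lemma convex_comb_in_oo (a b x y l : R) :
  (a < x < b)%R -> (a < y < b)%R -> (0 <= l <= 1)%R -> (a < l * x + (1 - l) * y < b)%R.
Proof.
move=> /andP[ax xb] /andP[ay yb] /andP[l0 l1].
have -> : (l * x + (1 - l) * y = y + l * (x - y))%R by ring.
by have [xy|yx] := lerP x y; apply/andP; split; nra.
Qed.

Lemma concave_on_oo_fine (a b : R) (K : R -> \bar R) : concave_on_oo a b K ->
  (forall t, (a < t < b)%R -> K t \is a fin_num) -> concave_on_oo_real a b (fine \o K).
Proof.
move=> Kconc Kfin x y l xab yab l01 /=.
have := Kconc x y l xab yab l01.
rewrite -(fineK (Kfin _ xab)) -(fineK (Kfin _ yab)).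
by rewrite -(fineK (Kfin _ (convex_comb_in_oo xab yab l01))) -!EFinM -EFinD lee_fin.
Qed.

Lemma concave_on_oo_cvg (a b s0 : R) (K : R -> \bar R) : concave_on_oo a b K ->
  (forall t, (a < t < b)%R -> K t \is a fin_num) -> (a < s0 < b)%R ->
  K s @[s --> s0] --> K s0.
Proof.
move=> Kconc Kfin s0ab; rewrite -(fineK (Kfin _ s0ab)).
apply: cvg_EFin; last exact: concave_continuous (concave_on_oo_fine Kconc Kfin) s0ab.
near=> s; apply: Kfin; rewrite -[_ && _]/(s \in `]a, b[); near: s.
by apply: near_in_itvoo; rewrite in_itv.
Unshelve. all: by end_near.
Qed.

Lemma cvg_at_right_within (T : topologicalType) (f : R -> T) (A : set R) x :
  A `<=` [set s | (x <= s)%R] -> f @ x^'+ --> f x -> f @ within A (nbhs x) --> f x.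
Proof.
move=> Ax fx U Ufx; have := fx U Ufx; near_simpl; rewrite !near_withinE.
apply: filterS => s Us /Ax /=; rewrite le_eqVlt => /predU1P[<-|//].
exact: nbhs_singleton.
Qed.

Lemma cvg_at_left_within (T : topologicalType) (f : R -> T) (A : set R) x :
  A `<=` [set s | (s <= x)%R] -> f @ x^'- --> f x -> f @ within A (nbhs x) --> f x.
Proof.
move=> Ax fx U Ufx; have := fx U Ufx; near_simpl; rewrite !near_withinE.
apply: filterS => s Us /Ax /=; rewrite le_eqVlt => /predU1P[->|//].
exact: nbhs_singleton.
Qed.

Lemma kernel_cvg_within (K : R -> \bar R) (s0 : R) : is_kernel K -> (-1 <= s0 <= 1)%R ->
  K s @[s --> within [set s | (-1 <= s <= 1)%R] (nbhs s0)] --> K s0.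
Proof.
case=> Kfin _ Kconcl Kconcr [K0r [K0l [Km1 K1]]] /andP[m1s0 s01].
have [->|s0Nm1] := eqVneq s0 (-1)%R.
  by apply: cvg_at_right_within Km1 => s /andP[].
have [->|s0N1] := eqVneq s0 1%R.
  by apply: cvg_at_left_within K1 => s /andP[].
apply: cvg_within_filter; have [s0neg|s0pos|->] := ltgtP s0 0%R.
- apply: (concave_on_oo_cvg Kconcl) => [t tI|]; first by apply: Kfin; left.
  by rewrite s0neg andbT lt_neqAle eq_sym s0Nm1.
- apply: (concave_on_oo_cvg Kconcr) => [t tI|]; first by apply: Kfin; right.
  by rewrite s0pos lt_neqAle s0N1.
- exact/left_right_continuousP.
Qed.

End kernel_continuity.

Section ereal_filter_bounds.
Context {R : realType} {I : Type} {F : set_system I} {FF : Filter F}.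
Local Open Scope ereal_scope.
Implicit Types (f : I -> \bar R) (L : \bar R).

Lemma cvge_gt_near f L (a : R) : f @ F --> L -> a%:E < L ->
  \forall x \near F, a%:E < f x.
Proof.
case: L => [r| |] //; last by move=> /cvgeyPgt.
move=> /fine_cvgP[ffin fr]; rewrite lte_fin => ar.
near=> x; have fx : f x \is a fin_num by near: x.
rewrite -(fineK fx) lte_fin; near: x; exact: cvgr_gt fr _ ar.
Unshelve. all: by end_near.
Qed.

Lemma cvge_lt_near f L (b : R) : f @ F --> L -> L < b%:E ->
  \forall x \near F, f x < b%:E.
Proof.
case: L => [r| |] //; last by move=> /cvgeNyPlt.
move=> /fine_cvgP[ffin fr]; rewrite lte_fin => rb.
near=> x; have fx : f x \is a fin_num by near: x.
rewrite -(fineK fx) lte_fin; near: x; exact: cvgr_lt fr _ rb.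
Unshelve. all: by end_near.
Qed.

Lemma cvge_strict_bounds f L :
  (forall a : R, a%:E < L -> \forall x \near F, a%:E < f x) ->
  (forall b : R, L < b%:E -> \forall x \near F, f x < b%:E) -> f @ F --> L.
Proof.
case: L => [r| |] fgt flt.
- have band e : (0 < e)%R -> \forall x \near F, (r - e)%:E < f x < (r + e)%:E.
    move=> e0; near=> x; apply/andP; split; near: x;
      [apply: fgt|apply: flt]; rewrite lte_fin; lra.
  apply/fine_cvgP; split.
    by move: (band 1%R ltr01); apply: filterS => x /andP[]; case: (f x).
  apply/cvgrPdist_lt => e e0; move: (band e e0); apply: filterS => x /=.
  case: (f x) => [s||] /andP[] //.
  by rewrite !lte_fin => ? ?; rewrite ltr_distlC; apply/andP.
- by apply/cvgeyPgt => A; apply: fgt; rewrite ltry.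
- by apply/cvgeNyPlt => A; apply: flt; rewrite ltNyr.
Unshelve. all: by end_near.
Qed.

Lemma cvg_esum_lty (T : Type) (r : seq T) (f : T -> I -> \bar R) (l : T -> \bar R) :
  (forall j, l j < +oo) -> (forall j, f j @ F --> l j) ->
  \sum_(j <- r) f j i @[i --> F] --> \sum_(j <- r) l j.
Proof.
move=> l_lty fl; elim: r => [|j r IHr].
  by rewrite big_nil; under eq_fun do rewrite big_nil; exact: cvg_cst.
rewrite big_cons; under eq_fun do rewrite big_cons.
apply: cvgeD (fl j) IHr.
by apply: ltpinfty_adde_def; rewrite inE ?l_lty ?lte_sum_pinfty.
Qed.

End ereal_filter_bounds.

Lemma lte_EFin_between (R : realType) (x : \bar R) (b : R) : (x < b%:E)%E ->
  exists2 c : R, (x < c%:E)%E & c < b.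
Proof.
case: x => [r||] //= xb; last by exists (b - 1); [rewrite ltNyr | lra].
by exists ((r + b) / 2); rewrite ?lte_fin in xb *; lra.
Qed.

Lemma near_pair_snd (T U : topologicalType) (t : T) (u : U) (Q : set (T * U)) :
  (\forall p \near (t, u), Q p) -> \forall x \near u, Q (t, x).
Proof. exact: (cvg_pair (cvg_cst t) cvg_id). Qed.

Lemma near_pair_fst (T U : topologicalType) (t : T) (u : U) (Q : set (T * U)) :
  (\forall p \near (t, u), Q p) -> \forall p \near (t, u), Q (p.1, u).
Proof. exact: (cvg_pair cvg_fst (cvg_cst u)). Qed.

Section boundary_points.
Variables (R : realType) (n : nat).
Implicit Types (x y : 'rV[R]_n) (k : nat).

Lemma yext_ord x (i : 'I_n) : yext x i.+1 = x 0 i.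
Proof. by rewrite /yext valK. Qed.

Lemma yext_last x : yext x n.+1 = 1.
Proof. by rewrite /yext insubF // ltnn. Qed.

Lemma yext_cases k : (forall x, yext x k = 0) \/ (forall x, yext x k = 1) \/
  exists i : 'I_n, k = i.+1.
Proof.
case: k => [|k]; first by left.
case: (ltnP k n) => [kn|nk]; first by right; right; exists (Ordinal kn).
by right; left => x; rewrite /yext insubF // ltnNge nk.
Qed.

Lemma yext_cvg k y : (fun x : 'rV[R]_n => yext x k) @ y --> yext y k.
Proof.
move: y; change (continuous (fun x : 'rV[R]_n => yext x k)).
case: (yext_cases k) => [k0|[k1|[i ->]]].
- by rewrite (funext k0); exact: cst_continuous.
- by rewrite (funext k1); exact: cst_continuous.
- by rewrite (funext (@yext_ord ^~ i)); exact: coord_continuous.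
Qed.

Lemma yext_const_or_neq k y (t : R) : (forall i, t != y 0 i) ->
  (forall x, yext x k = yext y k) \/ t != yext y k.
Proof.
move=> tNy; case: (yext_cases k) => [k0|[k1|[i ->]]].
- by left => x; rewrite !k0.
- by left => x; rewrite !k1.
- by right; rewrite yext_ord.
Qed.

Lemma Sbar_yext_mono y k l : Sbar y -> (k <= l <= n.+1)%N -> yext y k <= yext y l.
Proof.
move=> Sy; elim: l => [|l IHl] /andP[kl ln]; first by move: kl; rewrite leqn0 => /eqP ->.
move: kl; rewrite leq_eqVlt => /orP[/eqP -> //|]; rewrite ltnS => kl.
by apply: le_trans (IHl _) (Sy _ ln); rewrite kl (ltnW ln).
Qed.

Lemma Sbar_yext_01 y k : Sbar y -> (k <= n.+1)%N -> 0 <= yext y k <= 1.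
Proof.
move=> Sy kn; rewrite -[X in X <= _ <= _]/(yext y 0) -(yext_last y).
by rewrite !Sbar_yext_mono // kn leqnn.
Qed.

Lemma Sbar_coord_01 y (i : 'I_n) : Sbar y -> 0 <= y 0 i <= 1.
Proof. by move=> Sy; rewrite -yext_ord Sbar_yext_01 // ltnS ltnW. Qed.

Lemma Sbar_yext_itv_01 y k (t : R) : Sbar y -> (k <= n)%N ->
  yext y k <= t <= yext y k.+1 -> 0 <= t <= 1.
Proof.
move=> Sy kn /andP[kt tk].
have /andP[k0 _] := Sbar_yext_01 Sy (leqW kn).
have /andP[_ k1] := Sbar_yext_01 Sy (kn : (k.+1 <= n.+1)%N).
by rewrite (le_trans k0 kt) (le_trans tk k1).
Qed.

End boundary_points.

Section boundary_stability.
Variables (R : realType) (n : nat).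
Implicit Types (y : 'rV[R]_n) (k : nat).

Lemma near_yext_le k y (t : R) : (forall i, t != y 0 i) -> yext y k <= t ->
  \forall x \near y, yext x k <= t.
Proof.
move=> tNy ykt; case: (yext_const_or_neq k tNy) => [yconst|tNyk].
  by near=> x; rewrite yconst.
have ykt' : yext y k < t by rewrite lt_neqAle eq_sym tNyk.
by near=> x; apply/ltW; near: x; exact: (cvgr_lt _ (yext_cvg (k:=k) (y:=y)) _ ykt').
Unshelve. all: by end_near.
Qed.

Lemma near_le_yext k y (t : R) : (forall i, t != y 0 i) -> t <= yext y k ->
  \forall x \near y, t <= yext x k.
Proof.
move=> tNy tyk; case: (yext_const_or_neq k tNy) => [yconst|tNyk].
  by near=> x; rewrite yconst.
have tyk' : t < yext y k by rewrite lt_neqAle tNyk.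
by near=> x; apply/ltW; near: x; exact: (cvgr_gt _ (yext_cvg (k:=k) (y:=y)) _ tyk').
Unshelve. all: by end_near.
Qed.

Lemma near_in_yext_itv k y (t : R) : (forall i, t != y 0 i) ->
  yext y k <= t <= yext y k.+1 -> \forall x \near y, yext x k <= t <= yext x k.+1.
Proof.
move=> tNy /andP[kt tk]; near=> x.
by rewrite (near (near_yext_le tNy kt) x) ?(near (near_le_yext tNy tk) x).
Unshelve. all: by end_near.
Qed.

Lemma yext_snd_cvg k (t0 : R) y :
  yext p.2 k - p.1 @[p --> (t0, y)] --> yext y k - t0.
Proof.
by apply: cvgB; [exact: cvg_comp cvg_snd (yext_cvg (k:=k) (y:=y))|exact: cvg_fst].
Qed.

Lemma near_yext_le_sub k y (t0 : R) : (forall i, t0 != y 0 i) ->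
  \forall p \near (t0, y), yext p.2 k <= p.1 -> yext y k <= p.1.
Proof.
move=> t0Ny; case: (yext_const_or_neq k t0Ny) => [yconst|].
  by near=> p; rewrite yconst.
rewrite neq_lt => /orP[t0lt|ylt].
  have := cvgr_gt _ (yext_snd_cvg (k:=k) (t0:=t0) (y:=y)) 0.
  rewrite subr_gt0 => /(_ (nbhs_filter _) t0lt).
  by apply: filterS => p; rewrite subr_gt0 => /lt_geF ->.
by near=> p => _; apply/ltW; near: p; apply: (cvgr_gt _ cvg_fst).
Unshelve. all: by end_near.
Qed.

Lemma near_le_yext_sub k y (t0 : R) : (forall i, t0 != y 0 i) ->
  \forall p \near (t0, y), p.1 <= yext p.2 k -> p.1 <= yext y k.
Proof.
move=> t0Ny; case: (yext_const_or_neq k t0Ny) => [yconst|].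
  by near=> p; rewrite yconst.
rewrite neq_lt => /orP[t0lt|ylt].
  by near=> p => _; apply/ltW; near: p; apply: (cvgr_lt _ cvg_fst).
have := cvgr_lt _ (yext_snd_cvg (k:=k) (t0:=t0) (y:=y)) 0.
rewrite subr_lt0 => /(_ (nbhs_filter _) ylt).
by apply: filterS => p; rewrite subr_lt0 => /lt_geF ->.
Unshelve. all: by end_near.
Qed.

Lemma near_yext_itv_sub k y (t0 : R) : (forall i, t0 != y 0 i) ->
  \forall p \near (t0, y), yext p.2 k <= p.1 <= yext p.2 k.+1 ->
    yext y k <= p.1 <= yext y k.+1.
Proof.
move=> t0Ny; near=> p => /andP[kp pk].
by rewrite (near (near_yext_le_sub k t0Ny) p) ?(near (near_le_yext_sub k.+1 t0Ny) p).
Unshelve. all: by end_near.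
Qed.

End boundary_stability.

Section kernel_sum.
Variables (R : realType) (n : nat) (K : 'I_n -> R -> \bar R).
Local Open Scope ereal_scope.

Definition kernel_sum (y : 'rV[R]_n) (t : R) : \bar R := \sum_(i < n) K i (t - y 0 i)%R.

Definition segment_Sbar : set (R * 'rV[R]_n) := [set p | (0 <= p.1 <= 1)%R /\ Sbar p.2].

Lemma segment_Sbar_sub p i : segment_Sbar p -> (-1 <= p.1 - p.2 0 i <= 1)%R.
Proof.
by case=> /andP[? ?] /(Sbar_coord_01 i) /andP[? ?]; apply/andP; split; lra.
Qed.

Hypothesis Kker : forall i, is_kernel (K i).

Lemma kernel_sum_lty p : segment_Sbar p -> kernel_sum p.2 p.1 < +oo.
Proof.
move=> Dp; apply: lte_sum_pinfty => i _; rewrite ltey.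
by case: (Kker i) => _ KNy _ _ _; apply/KNy/segment_Sbar_sub.
Qed.

Lemma kernel_sum_cvg (t0 : R) y : segment_Sbar (t0, y) ->
  kernel_sum p.2 p.1 @[p --> within segment_Sbar (nbhs (t0, y))] --> kernel_sum y t0.
Proof.
move=> Dy; apply: cvg_esum_lty => i.
  by case: (Kker i) => _ KNy _ _ _; rewrite ltey; apply: KNy (segment_Sbar_sub i Dy).
have diff_cvg :
    (fun p : R * 'rV[R]_n => p.1 - p.2 0 i)%R @ (t0, y) --> (t0 - y 0 i)%R.
  apply: cvgB; first exact: cvg_fst.
  apply: (@cvg_comp _ _ _ (fun p : R * 'rV[R]_n => p.2) (fun M : 'rV[R]_n => (M 0 i)%R)
    _ (nbhs y)).
    exact: cvg_snd.
  exact: coord_continuous.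
move=> P /(kernel_cvg_within (Kker i) (segment_Sbar_sub i Dy)) /diff_cvg.
near_simpl; rewrite near_withinE.
by apply: filterS => p KP Dp; apply/KP/segment_Sbar_sub.
Qed.

Hypothesis Ksing : forall i, singular_kernel (K i).

Lemma kernel_sum_fin_neq y t : kernel_sum y t \is a fin_num -> forall i, (t != y 0 i)%R.
Proof.
move=> Gfin i; apply: contraTneq Gfin => ->.
by rewrite fin_numE negb_and negbK; apply/orP; left; rewrite esum_eqNy;
  apply/existsP; exists i; rewrite /= subrr Ksing.
Qed.

End kernel_sum.

Section mj_continuity.
Variables (R : realType) (n : nat) (K : 'I_n -> R -> \bar R) (J : R -> \bar R).
Hypotheses (Kker : forall i, is_kernel (K i)) (Ksing : forall i, singular_kernel (K i)).
Variable M : R.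
Hypothesis JleM : forall t, (0 <= t <= 1)%R -> (J t <= M%:E)%E.
Variable j : nat.
Hypothesis jn : (j <= n)%N.
Local Open Scope ereal_scope.

Lemma Ffun_le_mj x t : (yext x j <= t <= yext x j.+1)%R -> Ffun J K x t <= mj J K j x.
Proof. by move=> tI; apply: ereal_sup_ubound; exists t; rewrite //= in_itv. Qed.

Lemma mj_lsc (y : 'rV[R]_n) (a : R) : Sbar y -> a%:E < mj J K j y ->
  \forall x \near y, Sbar x -> a%:E < mj J K j x.
Proof.
move=> Sy /ereal_sup_gtP[_ [t tI <-]]; rewrite /= in_itv /= in tI.
have t01 := Sbar_yext_itv_01 Sy jn tI.
have Dty : segment_Sbar (t, y) by [].
rewrite /Ffun -/(kernel_sum K y t) => aF.
have [Jfin Gfin] : J t \is a fin_num /\ kernel_sum K y t \is a fin_num.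
  move: aF (JleM t01) (kernel_sum_lty Kker Dty).
  by case: (J t) => [q||]; case: (kernel_sum K y t) => [r||].
pose e := ((fine (J t) + fine (kernel_sum K y t) - a) / 2)%R.
have e0 : (0 < e)%R.
  by move: aF; rewrite -(fineK Jfin) -(fineK Gfin) -EFinD lte_fin /e => ?; lra.
have G_gt : \forall x \near y, segment_Sbar (t, x) ->
    (fine (kernel_sum K y t) - e)%:E < kernel_sum K x t.
  have : (fine (kernel_sum K y t) - e)%:E < kernel_sum K y t.
    by rewrite -[X in _ < X](fineK Gfin) lte_fin; lra.
  move=> /(cvge_gt_near (kernel_sum_cvg Kker Dty)); near_simpl; rewrite near_withinE.
  exact: near_pair_snd.
have tNy := kernel_sum_fin_neq Ksing Gfin.
near=> x => Sx; apply: lt_le_trans (Ffun_le_mj _); last by near: x; exact: near_in_yext_itv.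
have Gx : (fine (kernel_sum K y t) - e)%:E < kernel_sum K x t.
  by have := near G_gt x; apply.
rewrite /Ffun -/(kernel_sum K x t) -(fineK Jfin).
move: Gx; case: (kernel_sum K x t) => [s||] //= Gx; last by rewrite addey ?ltry.
by move: e0; rewrite -EFinD !lte_fin /e in Gx *; lra.
Unshelve. all: by end_near.
Qed.

Lemma Ffun_near_lt_fin (y : 'rV[R]_n) (t0 c r : R) : Sbar y -> (0 <= t0 <= 1)%R ->
  kernel_sum K y t0 = r%:E -> mj J K j y < c%:E ->
  \forall p \near (t0, y), Sbar p.2 -> (yext p.2 j <= p.1 <= yext p.2 j.+1)%R ->
    Ffun J K p.2 p.1 < c%:E.
Proof.
move=> Sy t0_01 Gr mjc; have Dy : segment_Sbar (t0, y) by [].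
have Gcvg := kernel_sum_cvg Kker Dy; rewrite Gr in Gcvg.
have [c' mjc' c'c] := lte_EFin_between mjc.
pose e := ((c - c') / 2)%R.
have e0 : (0 < e)%R by rewrite /e; lra.
have Gx : \forall p \near (t0, y), segment_Sbar p -> kernel_sum K p.2 p.1 < (r + e)%:E.
  have : r%:E < (r + e)%:E by rewrite lte_fin; lra.
  by move=> /(cvge_lt_near Gcvg); near_simpl; rewrite near_withinE.
have Gy : \forall p \near (t0, y), segment_Sbar (p.1, y) ->
    (r - e)%:E < kernel_sum K y p.1.
  have : (r - e)%:E < r%:E by rewrite lte_fin; lra.
  move=> /(cvge_gt_near Gcvg); near_simpl; rewrite near_withinE.
  exact: near_pair_fst.
have t0Ny : forall i, (t0 != y 0 i)%R.
  by apply: (kernel_sum_fin_neq (K := K)) => //; rewrite Gr.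
near=> p => Sp pI; have p01 := Sbar_yext_itv_01 Sp jn pI.
have /Ffun_le_mj Fy : (yext y j <= p.1 <= yext y j.+1)%R.
  by have := near (near_yext_itv_sub j t0Ny) p; apply.
have Gpx : kernel_sum K p.2 p.1 < (r + e)%:E by have := near Gx p; apply.
have Gpy : (r - e)%:E < kernel_sum K y p.1 by have := near Gy p; apply.
have Gyp : kernel_sum K y p.1 < +oo by apply: (kernel_sum_lty Kker (p := (p.1, y))).
move: (le_lt_trans Fy mjc') (JleM p01) Gpx Gpy Gyp.
rewrite /Ffun -/(kernel_sum K y p.1) -/(kernel_sum K p.2 p.1).
case: (J p.1) => [q||] //; case: (kernel_sum K p.2 p.1) => [s||] //;
  case: (kernel_sum K y p.1) => [s'||] //=.
all: rewrite ?addeNy ?addNye ?ltNyr //.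
by rewrite !lte_fin /e => *; lra.
Unshelve. all: by end_near.
Qed.

Lemma Ffun_near_lt_Ny (y : 'rV[R]_n) (t0 c : R) : Sbar y -> (0 <= t0 <= 1)%R ->
  kernel_sum K y t0 = -oo ->
  \forall p \near (t0, y), Sbar p.2 -> (yext p.2 j <= p.1 <= yext p.2 j.+1)%R ->
    Ffun J K p.2 p.1 < c%:E.
Proof.
move=> Sy t0_01 GNy; have Dy : segment_Sbar (t0, y) by [].
have Gcvg := kernel_sum_cvg Kker Dy; rewrite GNy in Gcvg.
have Gx : \forall p \near (t0, y), segment_Sbar p -> kernel_sum K p.2 p.1 < (c - M)%:E.
  by move: (ltNyr (c - M)) => /(cvge_lt_near Gcvg); near_simpl; rewrite near_withinE.
near=> p => Sp pI; have p01 := Sbar_yext_itv_01 Sp jn pI.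
have Gpx : kernel_sum K p.2 p.1 < (c - M)%:E by have := near Gx p; apply.
move: (JleM p01) Gpx; rewrite /Ffun -/(kernel_sum K p.2 p.1).
case: (J p.1) => [q||] //; case: (kernel_sum K p.2 p.1) => [s||] //=.
all: rewrite ?addeNy ?addNye ?ltNyr // lee_fin !lte_fin => *; lra.
Unshelve. all: by end_near.
Qed.

Lemma mj_usc (y : 'rV[R]_n) (b : R) : Sbar y -> mj J K j y < b%:E ->
  \forall x \near y, Sbar x -> mj J K j x < b%:E.
Proof.
move=> Sy /lte_EFin_between[c mjc cb].
suff : \forall x \near y, `[0%R, 1%R] `<=` [set t | Sbar x ->
    (yext x j <= t <= yext x j.+1)%R -> Ffun J K x t < c%:E].
  apply: filterS => x cover Sx.
  apply: le_lt_trans (_ : c%:E < b%:E); last by rewrite lte_fin.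
  apply: ge_ereal_sup => _ [t tI <-]; rewrite /= in_itv /= in tI.
  apply/ltW/cover => //.
  by rewrite /= in_itv; exact: Sbar_yext_itv_01 Sx jn tI.
apply: ((compact_near_coveringP _).1 (@segment_compact R 0 1) _ (nbhs y)
  (fun x t => Sbar x -> (yext x j <= t <= yext x j.+1)%R -> Ffun J K x t < c%:E)).
move=> t0; rewrite /= in_itv /= => t0_01; have Dy : segment_Sbar (t0, y) by [].
move: (kernel_sum_lty Kker Dy); case EG : (kernel_sum K y t0) => [r||] // _.
- exact: Ffun_near_lt_fin EG mjc.
- exact: Ffun_near_lt_Ny EG.
Qed.

End mj_continuity.

Theorem lemma3p3 (R : realType) (n : nat) (K : 'I_n -> R -> \bar R)
  (J : R -> \bar R) :
  (forall i, is_kernel (K i)) -> (forall i, singular_kernel (K i)) ->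
  is_field_fun n J ->
  forall j : 'I_n.+1, {within @Sbar R n, continuous (mj J K j)}.
Proof.
move=> Kker Ksing [[M JleM] _] j.
have jn : (j <= n)%N by rewrite -ltnS.
apply/subspace_continuousP => y Sy.
apply: cvge_strict_bounds => [a|b] mj_bound.
- exact: (mj_lsc Kker Ksing JleM jn Sy mj_bound).
- exact: (mj_usc Kker Ksing JleM jn Sy mj_bound).
Qed.
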